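(* For every command $c$ of the While-language, stores $\sigma,\sigma'$ and status flag $\delta$: if $(c,\sigma,\Downarrow)\Rightarrow^{co}_G\sigma',\delta$ and not $(c,\sigma,\Downarrow)\Rightarrow_G\sigma',\delta$, then $(c,\sigma,\Downarrow)\Rightarrow^{co}_G\sigma',\Uparrow$.
   Context: While-language syntax: variables $x$ range over a countably infinite set $\mathit{Var}$; $n$ ranges over natural numbers; values are $v ::= \mathsf{null}\mid n$ ($\mathsf{null}$ distinct from every natural number); expressions are $e ::= v\mid x\mid e_1\oplus e_2$ with $\oplus\in\{+,-,*\}$, where $\oplus(n_1,n_2)$ is the result of the operation on naturals; commands are $c ::= \mathsf{skip}\mid\mathsf{alloc}\ x\mid x:=e\mid c_1;c_2\mid \mathsf{if}\ e\ c_1\ c_2\mid\mathsf{while}\ e\ c$. A store $\sigma$ is a finite partial map from $\mathit{Var}$ to values, with domain $\mathrm{dom}(\sigma)$, lookup $\sigma(x)$, update $\sigma[x\mapsto v]$. Flag-based big-step semantics: status flags $\delta ::= \Downarrow\mid\Uparrow$ (convergent / divergent). Expression evaluation $(e,\sigma,\delta)\Rightarrow_{GE}v,\delta'$ is the least relation with: $(v,\sigma,\Downarrow)\Rightarrow_{GE}v,\Downarrow$; $(x,\sigma,\Downarrow)\Rightarrow_{GE}\sigma(x),\Downarrow$ if $x\in\mathrm{dom}(\sigma)$; if $(e_1,\sigma,\Downarrow)\Rightarrow_{GE}n_1,\delta$ and $(e_2,\sigma,\delta)\Rightarrow_{GE}n_2,\delta'$ ($n_1,n_2$ naturals) then $(e_1\oplus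 e_2,\sigma,\Downarrow)\Rightarrow_{GE}\oplus(n_1,n_2),\delta'$; and $(e,\sigma,\Uparrow)\Rightarrow_{GE}v,\Uparrow$ for every value $v$. The command rules for judgments $(c,\sigma,\delta)\Rightarrow_G\sigma',\delta'$ are: $(\mathsf{skip},\sigma,\Downarrow)\Rightarrow_G\sigma,\Downarrow$; $(\mathsf{alloc}\ x,\sigma,\Downarrow)\Rightarrow_G\sigma[x\mapsto\mathsf{null}],\Downarrow$ if $x\notin\mathrm{dom}(\sigma)$; $(x:=e,\sigma,\Downarrow)\Rightarrow_G\sigma[x\mapsto v],\delta$ if $x\in\mathrm{dom}(\sigma)$ and $(e,\sigma,\Downarrow)\Rightarrow_{GE}v,\delta$; $(c_1;c_2,\sigma,\Downarrow)\Rightarrow_G\sigma'',\delta'$ if $(c_1,\sigma,\Downarrow)\Rightarrow_G\sigma',\delta$ and $(c_2,\sigma',\delta)\Rightarrow_G\sigma'',\delta'$; $(\mathsf{if}\ e\ c_1\ c_2,\sigma,\Downarrow)\Rightarrow_G\sigma',\delta'$ if $v\ne0$, $(e,\sigma,\Downarrow)\Rightarrow_{GE}v,\delta$ and $(c_1,\sigma,\delta)\Rightarrow_G\sigma',\delta'$; $(\mathsf{if}\ e\ c_1\ c_2,\sigma,\Downarrow)\Rightarrow_G\sigma',\delta'$ if $(e,\sigma,\Downarrow)\Rightarrow_{GE}0,\delta$ and $(c_2,\sigma,\delta)\Rightarrow_G\sigma',\delta'$; $(\mathsf{while}\ e\ c,\sigma,\Downarrow)\Rightarrow_G\sigma'',\delta''$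 if $(e,\sigma,\Downarrow)\Rightarrow_{GE}v,\delta$, $v\ne0$, $(c,\sigma,\delta)\Rightarrow_G\sigma',\delta'$ and $(\mathsf{while}\ e\ c,\sigma',\delta')\Rightarrow_G\sigma'',\delta''$; $(\mathsf{while}\ e\ c,\sigma,\Downarrow)\Rightarrow_G\sigma,\delta$ if $(e,\sigma,\Downarrow)\Rightarrow_{GE}0,\delta$; $(c,\sigma,\Uparrow)\Rightarrow_G\sigma',\Uparrow$ for every store $\sigma'$. $\Rightarrow_G$ is the inductive interpretation (least relation closed under these rules) and $\Rightarrow^{co}_G$ the coinductive interpretation of the same rules (greatest relation such that every element is the conclusion of a rule instance whose command premises lie in it). *)

From HB Require Import structures.
From mathcomp Require Import all_boot finmap.

Set Implicit Arguments.
Unset Strict Implicit.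
Unset Printing Implicit Defensive.

Local Open Scope fmap_scope.

Notation var := nat.

Definition value := option nat.
Definition null : value := None.
Definition vnat (n : nat) : value := Some n.

Inductive binop := Plus | Minus | Times.

(* oplus on naturals (subtraction on naturals is truncated). *)
Definition op_nat (o : binop) (n1 n2 : nat) : nat :=
  match o with
  | Plus => addn n1 n2
  | Minus => subn n1 n2
  | Times => muln n1 n2
  end.

Inductive expr :=
  | EVal of value
  | EVar of var
  | EOp of binop & expr & expr.

Inductive cmd :=
  | Skip
  | Alloc of var
  | Assign of var & expr
  | Seq of cmd & cmd
  | If of expr & cmd & cmd
  | While of expr & cmd.

Notation store := {fmap var -> value}.

Inductive flag := Conv | Div.

Inductive evalGE : expr -> store -> flag -> value -> flag -> Prop :=
  | GE_val v s : evalGE (EVal v) s Conv v Conv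
  | GE_var (x : var) (s : store) (v : value) : fnd s x = Some v -> evalGE (EVar x) s Conv v Conv
  | GE_op o e1 e2 s n1 n2 d d' :
      evalGE e1 s Conv (vnat n1) d ->
      evalGE e2 s d (vnat n2) d' ->
      evalGE (EOp o e1 e2) s Conv (vnat (op_nat o n1 n2)) d'
  | GE_div e s v : evalGE e s Div v Div.

Inductive execG : cmd -> store -> flag -> store -> flag -> Prop :=
  | G_skip s : execG Skip s Conv s Conv
  | G_alloc (x : var) (s : store) : x \notin domf s -> execG (Alloc x) s Conv s.[x <- null] Conv
  | G_assign (x : var) e (s : store) v d :
      x \in domf s -> evalGE e s Conv v d -> execG (Assign x e) s Conv s.[x <- v] d
  | G_seq c1 c2 s s' s'' d d' :
      execG c1 s Conv s' d -> execG c2 s' d s'' d' -> execG (Seq c1 c2) s Conv s'' d'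
  | G_if_true e c1 c2 s s' v d d' :
      v <> vnat 0 -> evalGE e s Conv v d -> execG c1 s d s' d' ->
      execG (If e c1 c2) s Conv s' d'
  | G_if_false e c1 c2 s s' d d' :
      evalGE e s Conv (vnat 0) d -> execG c2 s d s' d' ->
      execG (If e c1 c2) s Conv s' d'
  | G_while_true e c s s' s'' v d d' d'' :
      evalGE e s Conv v d -> v <> vnat 0 -> execG c s d s' d' ->
      execG (While e c) s' d' s'' d'' -> execG (While e c) s Conv s'' d''
  | G_while_false e c s d :
      evalGE e s Conv (vnat 0) d -> execG (While e c) s Conv s d
  | G_div c s s' : execG c s Div s' Div.

CoInductive coexecG : cmd -> store -> flag -> store -> flag -> Prop :=
  | CG_skip s : coexecG Skip s Conv s Conv
  | CG_alloc (x : var) (s : store) : x \notin domf s -> coexecG (Alloc x) s Conv s.[x <- null] Conv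
  | CG_assign (x : var) e (s : store) v d :
      x \in domf s -> evalGE e s Conv v d -> coexecG (Assign x e) s Conv s.[x <- v] d
  | CG_seq c1 c2 s s' s'' d d' :
      coexecG c1 s Conv s' d -> coexecG c2 s' d s'' d' -> coexecG (Seq c1 c2) s Conv s'' d'
  | CG_if_true e c1 c2 s s' v d d' :
      v <> vnat 0 -> evalGE e s Conv v d -> coexecG c1 s d s' d' ->
      coexecG (If e c1 c2) s Conv s' d'
  | CG_if_false e c1 c2 s s' d d' :
      evalGE e s Conv (vnat 0) d -> coexecG c2 s d s' d' ->
      coexecG (If e c1 c2) s Conv s' d'
  | CG_while_true e c s s' s'' v d d' d'' :
      evalGE e s Conv v d -> v <> vnat 0 -> coexecG c s d s' d' ->
      coexecG (While e c) s' d' s'' d'' -> coexecG (While e c) s Conv s'' d''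
  | CG_while_false e c s d :
      evalGE e s Conv (vnat 0) d -> coexecG (While e c) s Conv s d
  | CG_div c s s' : coexecG c s Div s' Div.

From HB Require Import structures.
From mathcomp Require Import all_boot finmap.
From Stdlib Require Import Classical.

(* In a coinductive derivation that is not an inductive
   one, some premise is again coinductive but not inductive (choose the first
   such, classically); by the coinduction hypothesis its final flag can be
   switched to divergence, and every later premise then starts from the
   divergent flag, where the axiom (c, s, Div) =>G^co s', Div closes it.
   Generalizing over the starting flag lets the hypothesis apply to the second
   premise of a sequence or loop, which may start in either flag. *)

Lemma coexecG_not_execG_Div (c : cmd) (s : store) (d0 : flag) (s' : store)
    (d : flag) :
  coexecG c s d0 s' d -> ~ execG c s d0 s' d -> coexecG c s d0 s' Div.
Proof.
revert c s d0 s' d; cofix CH => c s d0 s' d H.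
case: H => {c s d0 s' d}.
- by move=> s []; constructor.
- by move=> x s x_new []; constructor.
- by move=> x e s v d x_in ev []; econstructor; eassumption.
- move=> c1 c2 s s1 s' d1 d co1 co2 not_ex.
  (* [case:] rather than [have [..] :=], which would hide the corecursive
     calls under an application and break the guard condition. *)
  case: (classic (execG c1 s Conv s1 d1)) => [ex1 | not_ex1].
  + apply: (CG_seq co1); apply: (CH _ _ _ _ _ co2) => ex2.
    by apply: not_ex; econstructor; eassumption.
  + exact: CG_seq (CH _ _ _ _ _ co1 not_ex1) (CG_div _ _ _).
- move=> e c1 c2 s s' v d d' v_nz ev co1 not_ex.
  apply: (CG_if_true _ v_nz ev); apply: (CH _ _ _ _ _ co1) => ex1.
  by apply: not_ex; econstructor; eassumption.
- move=> e c1 c2 s s' d d' ev co2 not_ex.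
  apply: (CG_if_false _ ev); apply: (CH _ _ _ _ _ co2) => ex2.
  by apply: not_ex; econstructor; eassumption.
- move=> e c s s1 s' v d d1 d' ev v_nz co_body co_loop not_ex.
  case: (classic (execG c s d s1 d1)) => [ex_body | not_ex_body].
  + apply: (CG_while_true ev v_nz co_body); apply: (CH _ _ _ _ _ co_loop).
    by move=> ex_loop; apply: not_ex; econstructor; eassumption.
  + exact: CG_while_true ev v_nz (CH _ _ _ _ _ co_body not_ex_body)
             (CG_div _ _ _).
- by move=> e c s d ev []; constructor.
- by move=> c s s' []; constructor.
Qed.

Theorem lemma19 (c : cmd) (s s' : store) (d : flag) :
  coexecG c s Conv s' d -> ~ execG c s Conv s' d -> coexecG c s Conv s' Div.
Proof. exact: coexecG_not_execG_Div. Qed.
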